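(* Let $p,q\ge2$ be coprime, $\widetilde\Gamma=\langle\alpha,\beta\mid\alpha^p=\beta^q\rangle$ with $c=\alpha^p$, and let $r\ge1$ be an integer coprime to both $p$ and $q$. Let $G_r$ be the subgroup generated by $\alpha_r=\alpha^r$ and $\beta_r=\beta^r$. Then $\alpha\mapsto\alpha_r$, $\beta\mapsto\beta_r$ defines an isomorphism $\widetilde\Gamma\to G_r$, so $G_r\cong\langle\alpha_r,\beta_r\mid\alpha_r^p=\beta_r^q\rangle$, and: (i) $Z(G_r)=\langle c^r\rangle\subseteq Z(\widetilde\Gamma)$; (ii) $G_r'=\widetilde\Gamma'$; (iii) $G_r/G_r'$ is generated by the image of $x_r=\alpha_r^{q_1}\beta_r^{p_1}$ (where $pp_1+qq_1=1$), and the normal closure of $x_r$ in $\widetilde\Gamma$ and in $G_r$ both equal $G_r$; (iv) $G_r$ is normal in $\widetilde\Gamma$ and $\widetilde\Gamma/G_r\cong H/H_r\cong Z(\widetilde\Gamma)/Z(G_r)\cong\mathbb Z_r$, where $H=\widetilde\Gamma/\widetilde\Gamma'$, $H_r=G_r/G_r'$; (v) the projection $\widetilde\Gamma\to\widetilde\Gamma/Z(\widetilde\Gamma)\cong\Gamma_{p,q}$ maps $G_r$ onto $\Gamma_{p,q}$.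
   Context: $Z(\cdot)$ denotes the center and $(\cdot)'$ the commutator subgroup. The center of $\widetilde\Gamma$ is $\langle c\rangle$, and $\widetilde\Gamma/\langle c\rangle\cong\Gamma_{p,q}=\langle\alpha_0,\beta_0\mid\alpha_0^p=\beta_0^q=1\rangle$ via $\alpha\mapsto\alpha_0$, $\beta\mapsto\beta_0$. *)

(* Possibly-infinite groups are not available in MathComp,
   so we introduce an elementary (Prop-based) notion of group, subgroups as
   predicates, and group presentations via their universal property. *)
From HB Require Import structures.
From mathcomp Require Import all_boot all_order all_algebra.
Set Implicit Arguments. Unset Strict Implicit. Unset Printing Implicit Defensive.
Import GRing.Theory Num.Theory.

Record group := Group {
  carrier :> Type;
  gmul : carrier -> carrier -> carrier;
  ginv : carrier -> carrier;
  gone : carrier;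
  gmulA : forall x y z, gmul x (gmul y z) = gmul (gmul x y) z;
  gmul1 : forall x, gmul gone x = x;
  gmulV : forall x, gmul (ginv x) x = gone
}.
Arguments gmul {g}. Arguments ginv {g}. Arguments gone {g}.

Section GroupDefs.
Variable G : group.
Implicit Types (x y : G) (S N A : G -> Prop).

Fixpoint gpown x (n : nat) : G :=
  match n with O => gone | S n => gmul x (gpown x n) end.
Definition gpowz x (k : int) : G :=
  match k with Posz n => gpown x n | Negz n => ginv (gpown x n.+1) end.

Definition gcomm x y : G := gmul (gmul (ginv x) (ginv y)) (gmul x y).
Definition gconj x y : G := gmul (gmul (ginv y) x) y.

Definition gsubset S N := forall x, S x -> N x.
Definition gsame_set S N := forall x, S x <-> N x.

Definition gsubgroup S :=
  [/\ S gone, (forall x y, S x -> S y -> S (gmul x y)) & (forall x, S x -> S (ginv x))].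

Definition ggen A : G -> Prop := fun x => forall S, gsubgroup S -> gsubset A S -> S x.

Definition gsetT : G -> Prop := fun _ => True.

Definition gcenter S : G -> Prop := fun x => S x /\ forall y, S y -> gmul x y = gmul y x.

Definition gderived S : G -> Prop :=
  ggen (fun z => exists x y, [/\ S x, S y & z = gcomm x y]).

Definition gnormal_closure S x : G -> Prop :=
  ggen (fun z => exists g, S g /\ z = gconj x g).

Definition gnormal N S :=
  [/\ gsubgroup N, gsubset N S & forall x g, N x -> S g -> N (gconj x g)].

(* S / N is isomorphic to K (first isomorphism theorem form):
   a homomorphism on S onto K whose kernel (inside S) is exactly N. *)
Definition quotient_iso S N (K : group) :=
  exists f : G -> K,
    [/\ (forall x y, S x -> S y -> f (gmul x y) = gmul (f x) (f y)),
        (forall k : K, exists x, S x /\ f x = k)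
      & (forall x, S x -> (f x = gone <-> N x))].

(* (S / M) / (image of N in S / M) is isomorphic to K:
   kernel = { x in S | x M = y M for some y in N }. *)
Definition quotient2_iso S M N (K : group) :=
  exists f : G -> K,
    [/\ (forall x y, S x -> S y -> f (gmul x y) = gmul (f x) (f y)),
        (forall k : K, exists x, S x /\ f x = k)
      & (forall x, S x -> (f x = gone <-> exists y, N y /\ M (gmul x (ginv y))))].

End GroupDefs.
Arguments gsetT G _ : clear implicits.

Definition is_hom (G K : group) (f : G -> K) := forall x y, f (gmul x y) = gmul (f x) (f y).

(* (T, a, b) is a presentation of < a, b | a^p = b^q > :
   the relation holds, a and b generate T, and T has the universal property. *)
Definition torus_presentation (p q : nat) (T : group) (a b : T) :=
  [/\ gpown a p = gpown b q,
      (forall x, ggen (fun z => z = a \/ z = b) x)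
    & (forall (K : group) (u v : K), gpown u p = gpown v q ->
         exists f : T -> K, [/\ is_hom f, f a = u & f b = v])].

(* the cyclic group Z_r = Z / rZ (for r >= 1), carrier 'I_r *)
Definition Zr_group (r : nat) : group :=
  @Group 'I_(r.-1).+1 (@Zp_add (r.-1).+1) (@Zp_opp (r.-1).+1) (@Zp0 r.-1)
    (@Zp_addA (r.-1).+1) (@Zp_add0z r.-1) (@Zp_addNz r.-1).

From Pilot Require Import Defs.
From HB Require Import structures.
From mathcomp Require Import all_boot all_order all_algebra.
From Stdlib Require Import FunctionalExtensionality ProofIrrelevance PropExtensionality ClassicalEpsilon.
Set Implicit Arguments. Unset Strict Implicit. Unset Printing Implicit Defensive.
Import GRing.Theory.

(* The element [c = a^p = b^q] is central and of infinite order ([a |-> q],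
   [b |-> p] maps it to [pq] in [Z]); it generates [Z(T)], because every element
   is a reduced word of [Z_p * Z_q] times a power of [c], and [T] acts on reduced
   words in such a way that a nonempty word fails to commute with some letter.
   As [r] is invertible modulo [p] and modulo [q], [a] and [b] lie in [Z(T) G_r],
   so [T = Z(T) G_r]: this gives the normality of [G_r], [G_r' = T'], the normal
   closures of [x_r] and the projection onto [T / Z(T)]. The morphism
   [a |-> q m], [b |-> p m] into [Z_r], with [pqm = 1 (mod r)], sends [c] to [1]
   and has kernel exactly [G_r], which yields the three quotients and
   [Z(G_r) = <c^r>]. Finally [a |-> a^r], [b |-> b^r] is injective because
   [a |-> a^m], [b |-> b^m], with [rm = 1 (mod pq)], inverts it up to a power of [c]. *)

Declare Scope grp_scope.
Local Notation "x * y" := (gmul x y) : grp_scope.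
Local Notation "x ^-1" := (ginv x) : grp_scope.
Local Notation "1" := (@gone _) : grp_scope.
Local Notation "x ^+ n" := (gpown x n) : grp_scope.

(** * Groups *)

Section GroupTheory.
Variable G : group.
Implicit Types (x y z : G) (m n : nat) (k l : int).
Local Open Scope grp_scope.

Lemma mulgA x y z : x * (y * z) = x * y * z. Proof. exact: gmulA. Qed.
Lemma mul1g x : 1 * x = x. Proof. exact: gmul1. Qed.
Lemma mulVg x : x^-1 * x = 1. Proof. exact: gmulV. Qed.

Lemma mulgV x : x * x^-1 = 1.
Proof. by rewrite -{1}(mul1g x) -{1}(mulVg x^-1) -(mulgA _ _ x) mulVg -mulgA mul1g mulVg. Qed.

Lemma mulg1 x : x * 1 = x. Proof. by rewrite -(mulVg x) mulgA mulgV mul1g. Qed.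
Lemma mulKg x y : x^-1 * (x * y) = y. Proof. by rewrite mulgA mulVg mul1g. Qed.
Lemma mulVKg x y : x * (x^-1 * y) = y. Proof. by rewrite mulgA mulgV mul1g. Qed.
Lemma mulgK x y : x * y * y^-1 = x. Proof. by rewrite -mulgA mulgV mulg1. Qed.
Lemma mulgVK x y : x * y^-1 * y = x. Proof. by rewrite -mulgA mulVg mulg1. Qed.

Lemma mulgI x y z : x * y = x * z -> y = z.
Proof. by move=> e; rewrite -(mulKg x y) e mulKg. Qed.
Lemma mulIg x y z : y * x = z * x -> y = z.
Proof. by move=> e; rewrite -(mulgK y x) e mulgK. Qed.

Lemma invgK x : x^-1^-1 = x. Proof. by apply: (@mulIg x^-1); rewrite mulVg mulgV. Qed.
Lemma invMg x y : (x * y)^-1 = y^-1 * x^-1.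
Proof. by apply: (@mulgI (x * y)); rewrite mulgV -mulgA mulVKg mulgV. Qed.
Lemma invg1 : (1 : G)^-1 = 1. Proof. by rewrite -{2}(mulVg 1) mulg1. Qed.

Lemma mulg1_eq x y : x * y = 1 -> x^-1 = y.
Proof. by move=> e; apply: (@mulgI x); rewrite mulgV e. Qed.
Lemma divg1_eq x y : x * y^-1 = 1 -> x = y.
Proof. by move=> e; rewrite -(mulgVK x y) e mul1g. Qed.

Definition gcommute x y := x * y = y * x.

Lemma commute_sym x y : gcommute x y -> gcommute y x. Proof. by []. Qed.
Lemma commute1 y : gcommute 1 y. Proof. by rewrite /gcommute mul1g mulg1. Qed.
Lemma commuteM x y z : gcommute x z -> gcommute y z -> gcommute (x * y) z.
Proof. by rewrite /gcommute => exz eyz; rewrite -mulgA eyz mulgA exz -mulgA. Qed.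
Lemma commuteV x y : gcommute x y -> gcommute x^-1 y.
Proof. by rewrite /gcommute => e; apply: (@mulgI x); rewrite mulVKg mulgA e mulgK. Qed.

Lemma commute_of_gcomm x y : gcomm x y = 1 -> gcommute x y.
Proof.
move=> e; rewrite /gcommute.
have <- : y * x * gcomm x y = x * y by rewrite /gcomm !mulgA mulgK mulgV mul1g.
by rewrite e mulg1.
Qed.

Lemma gpownS x n : x ^+ n.+1 = x * x ^+ n. Proof. by []. Qed.
Lemma gpown1 x : x ^+ 1 = x. Proof. exact: mulg1. Qed.
Lemma gpownD x m n : x ^+ (m + n) = x ^+ m * x ^+ n.
Proof. by elim: m => [|m IH] /=; rewrite ?mul1g // IH mulgA. Qed.
Lemma gpownSr x n : x ^+ n.+1 = x ^+ n * x.
Proof. by rewrite -addn1 gpownD gpown1. Qed.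
Lemma gpownM x m n : x ^+ (m * n) = (x ^+ m) ^+ n.
Proof. by elim: n => [|n IH]; rewrite ?muln0 // mulnS gpownD IH. Qed.
Lemma gpown1n n : (1 : G) ^+ n = 1.
Proof. by elim: n => //= n ->; rewrite mul1g. Qed.

Lemma commuteX x y n : gcommute x y -> gcommute (x ^+ n) y.
Proof. by move=> e; elim: n => [|n IH]; [exact: commute1 | exact: commuteM]. Qed.
Lemma commuteXX x m n : gcommute (x ^+ m) (x ^+ n).
Proof. by apply/commuteX/commute_sym/commuteX. Qed.
Lemma gpownMn x y n : gcommute x y -> (x * y) ^+ n = x ^+ n * y ^+ n.
Proof.
move=> e; elim: n => [|n IH] /=; first by rewrite mul1g.
by rewrite IH -!mulgA (mulgA y) -(commuteX n e) !mulgA.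
Qed.

Lemma gpowz_nat x n : gpowz x n = x ^+ n. Proof. by []. Qed.
Lemma gpowz1 x : gpowz x 1 = x. Proof. exact: gpown1. Qed.

Lemma gpowz_subn x m n : gpowz x (m%:Z - n%:Z)%R = x ^+ m * (x ^+ n)^-1.
Proof.
case: (leqP n m) => [le_nm | lt_mn].
  by rewrite subzn //= -{2}(subnK le_nm) gpownD mulgK.
have -> : n = (m + (n - m).-1.+1)%N by rewrite prednK ?subn_gt0 // subnKC // ltnW.
move: (n - m).-1 => d; rewrite PoszD opprD addrA subrr add0r.
by rewrite -NegzE addnC gpownD invMg mulgA mulgV mul1g.
Qed.

Lemma int_subn k : exists m n : nat, k = (m%:Z - n%:Z)%R.
Proof.
case: k => n; first by exists n, 0%N; rewrite subr0.
by exists 0%N, n.+1; rewrite NegzE sub0r.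
Qed.

Lemma commuteXz x y k : gcommute x y -> gcommute (gpowz x k) y.
Proof. by move=> e; case: k => n; [|apply: commuteV]; exact: commuteX. Qed.

Lemma gpowzD x k l : gpowz x (k + l)%R = gpowz x k * gpowz x l.
Proof.
have [m1 [n1 ->]] := int_subn k; have [m2 [n2 ->]] := int_subn l.
rewrite addrACA -opprD -!PoszD !gpowz_subn !gpownD invMg.
have cV i j : gcommute (x ^+ i)^-1 (x ^+ j) by apply/commuteV/commuteXX.
have cVV i j : gcommute (x ^+ i)^-1 (x ^+ j)^-1 by apply/commuteV/commute_sym/commuteV/commuteXX.
by rewrite !mulgA -(mulgA _ (x ^+ n1)^-1) cV mulgA -(mulgA _ (x ^+ n1)^-1) cVV mulgA.
Qed.

Lemma gpowzN x k : gpowz x (- k)%R = (gpowz x k)^-1.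
Proof. by have [m [n ->]] := int_subn k; rewrite opprB !gpowz_subn invMg invgK. Qed.

Lemma gpowzMn x k n : gpowz x (k * n%:Z)%R = gpowz x k ^+ n.
Proof.
elim: n => [|n IH]; first by rewrite mulr0.
by rewrite -addn1 PoszD mulrDr mulr1 gpowzD IH gpownD gpown1.
Qed.

Lemma gpowzM x k l : gpowz x (k * l)%R = gpowz (gpowz x k) l.
Proof. by case: l => n; rewrite ?NegzE ?mulrN ?gpowzN gpowzMn. Qed.

Definition central x := forall y, gcommute x y.

Lemma central1 : central 1. Proof. exact: commute1. Qed.
Lemma centralM x y : central x -> central y -> central (x * y).
Proof. by move=> cx cy z; exact: commuteM. Qed.
Lemma centralV x : central x -> central x^-1.
Proof. by move=> cx z; exact: commuteV. Qed.
Lemma centralX x n : central x -> central (x ^+ n).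
Proof. by move=> cx z; exact: commuteX. Qed.
Lemma centralXz x k : central x -> central (gpowz x k).
Proof. by move=> cx z; exact: commuteXz. Qed.

Lemma gconj_central x y : central x -> gconj x y = x.
Proof. by move=> cx; rewrite /gconj -(cx y^-1) mulgVK. Qed.
Lemma gconjMl x y z : central z -> gconj x (z * y) = gconj x y.
Proof.
move=> cz; rewrite /gconj invMg !mulgA -(mulgA _ z^-1) (centralV cz x) !mulgA.
by rewrite mulgVK.
Qed.
Lemma gcommMl x y z : central z -> gcomm (z * x) y = gcomm x y.
Proof.
move=> cz; rewrite /gcomm invMg -!mulgA (mulgA z^-1) (centralV cz y^-1).
by rewrite -!mulgA mulKg.
Qed.
Lemma gcommMr x y z : central z -> gcomm x (z * y) = gcomm x y.
Proof.
move=> cz; rewrite /gcomm invMg -!mulgA (mulgA z^-1) (centralV cz x) -mulgA.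
by rewrite mulKg.
Qed.

Lemma gconjM x y z : gconj (gconj x y) z = gconj x (y * z).
Proof. by rewrite /gconj invMg !mulgA. Qed.
Lemma gconj1 x : gconj x 1 = x. Proof. by rewrite /gconj invg1 mul1g mulg1. Qed.

End GroupTheory.

Section Subgroups.
Variable G : group.
Implicit Types (x y : G) (A S : G -> Prop).
Local Open Scope grp_scope.

Section Closure.
Variable S : G -> Prop.
Hypothesis sgS : gsubgroup S.

Lemma gsubgroup1 : S 1. Proof. by case: sgS. Qed.
Lemma gsubgroupM x y : S x -> S y -> S (x * y). Proof. by case: sgS => _ h _; exact: h. Qed.
Lemma gsubgroupV x : S x -> S x^-1. Proof. by case: sgS => _ _ h; exact: h. Qed.
Lemma gsubgroupX x n : S x -> S (x ^+ n).
Proof. by move=> Sx; elim: n => [|n IH]; [exact: gsubgroup1 | exact: gsubgroupM]. Qed.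
Lemma gsubgroupXz x k : S x -> S (gpowz x k).
Proof. by move=> Sx; case: k => n; [|apply: gsubgroupV]; exact: gsubgroupX. Qed.
Lemma gsubgroupXz_abs x k : S (gpowz x k) <-> S (x ^+ `|k|%N).
Proof.
case: k => n //=; split; last exact: gsubgroupV.
by move/gsubgroupV; rewrite invgK.
Qed.
Lemma gsubgroupJ x y : S x -> S y -> S (gconj x y).
Proof. by move=> Sx Sy; do 2?apply: gsubgroupM => //; exact: gsubgroupV. Qed.
Lemma gsubgroupR x y : S x -> S y -> S (gcomm x y).
Proof. by move=> Sx Sy; do 2?apply: gsubgroupM => //; exact: gsubgroupV. Qed.

End Closure.

Lemma ggen_in A x : A x -> ggen A x. Proof. by move=> Ax S _; apply. Qed.
Lemma ggen_min A S : gsubgroup S -> gsubset A S -> gsubset (ggen A) S.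
Proof. by move=> sgS sAS x; apply. Qed.

Lemma ggen_subgroup A : gsubgroup (ggen A).
Proof.
split=> [S [] // | x y Ax Ay S sgS sAS | x Ax S sgS sAS].
- by apply: gsubgroupM; [|exact: Ax|exact: Ay].
- by apply: gsubgroupV; [|exact: Ax].
Qed.

Lemma trivial_subgroup : gsubgroup (fun x : G => x = 1).
Proof. by split=> [|x y -> ->|x ->]; rewrite ?mul1g ?invg1. Qed.

Lemma ggen_mono A B : gsubset A B -> gsubset (ggen A) (ggen B).
Proof. by move=> sAB; apply: ggen_min; [exact: ggen_subgroup | move=> x /sAB; exact: ggen_in]. Qed.

Lemma gcenter_subgroup S : gsubgroup S -> gsubgroup (gcenter S).
Proof.
move=> sgS; split.
- by split=> [|y _]; [exact: gsubgroup1 | exact: commute1].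
- move=> x y [Sx cx] [Sy cy]; split=> [|z Sz]; first exact: gsubgroupM.
  exact: commuteM (cx z Sz) (cy z Sz).
- by move=> x [Sx cx]; split=> [|z Sz]; [exact: gsubgroupV | exact: commuteV (cx z Sz)].
Qed.

Lemma central_gcenterT x : central x -> gcenter (gsetT G) x.
Proof. by move=> cx; split=> // y _; exact: cx. Qed.

Lemma gcomm_derived S x y : S x -> S y -> gderived S (gcomm x y).
Proof. by move=> Sx Sy; apply: ggen_in; exists x, y. Qed.

Lemma gderived_sub S : gsubgroup S -> gsubset (gderived S) S.
Proof. by move=> sgS; apply: ggen_min => // _ [x [y [Sx Sy ->]]]; exact: gsubgroupR. Qed.

Lemma gderived_mono S S' : gsubset S S' -> gsubset (gderived S) (gderived S').
Proof.
move=> sSS'; apply: ggen_min; first exact: ggen_subgroup.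
by move=> _ [x [y [Sx Sy ->]]]; apply: gcomm_derived; exact: sSS'.
Qed.

End Subgroups.

Section Homomorphisms.
Variables (G K : group) (f : G -> K).
Hypothesis homf : is_hom f.
Local Open Scope grp_scope.

Lemma hom1 : f 1 = 1. Proof. by apply: (@mulgI _ (f 1)); rewrite -homf !mulg1. Qed.
Lemma homV x : f x^-1 = (f x)^-1.
Proof. by apply: (@mulgI _ (f x)); rewrite -homf !mulgV hom1. Qed.
Lemma homX x n : f (x ^+ n) = f x ^+ n.
Proof. by elim: n => [|n IH] /=; rewrite ?hom1 // homf IH. Qed.
Lemma homXz x k : f (gpowz x k) = gpowz (f x) k.
Proof. by case: k => n; rewrite /gpowz ?homV homX. Qed.
Lemma homR x y : f (gcomm x y) = gcomm (f x) (f y). Proof. by rewrite /gcomm !homf !homV. Qed.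

Lemma preim_subgroup (S : K -> Prop) : gsubgroup S -> gsubgroup (fun x => S (f x)).
Proof.
move=> sgS; split=> [|x y|x]; rewrite ?hom1 ?homf ?homV.
- exact: gsubgroup1.
- exact: gsubgroupM.
- exact: gsubgroupV.
Qed.

Lemma image_subgroup : gsubgroup (fun y => exists x, f x = y).
Proof.
split=> [|_ _ [x <-] [y <-]|_ [x <-]]; first by exists 1; exact: hom1.
- by exists (x * y); exact: homf.
- by exists x^-1; exact: homV.
Qed.

Lemma hom_ggen (A : G -> Prop) (B : K -> Prop) :
  (forall x, A x -> B (f x)) -> forall x, ggen A x -> ggen B (f x).
Proof.
move=> fAB; apply: ggen_min; first exact/preim_subgroup/ggen_subgroup.
by move=> x Ax; apply: ggen_in; exact: fAB.
Qed.

Lemma hom_derived x : gderived (gsetT G) x -> gderived (fun y => exists x, f x = y) (f x).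
Proof.
apply: hom_ggen => _ [u [v [_ _ ->]]].
by exists (f u), (f v); split; [exists u | exists v | exact: homR].
Qed.

End Homomorphisms.

Lemma conj_hom (G : group) (g : G) : is_hom (fun x => gconj x g).
Proof. by move=> x y; rewrite /gconj -!mulgA (mulgA g) mulgV mul1g. Qed.

Section NormalSubgroups.
Variable G : group.
Implicit Types (x y g : G) (N S : G -> Prop).
Local Open Scope grp_scope.

Lemma gnormalT N : gsubgroup N -> (forall x g, N x -> N (gconj x g)) -> gnormal N (gsetT G).
Proof. by move=> sgN nN; split=> // x g Nx _; exact: nN. Qed.

Lemma gderived_normal : gnormal (gderived (gsetT G)) (gsetT G).
Proof.
apply: gnormalT => [|x g]; first exact: ggen_subgroup.
apply: (hom_ggen (conj_hom g)) => _ [u [v [_ _ ->]]].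
by exists (gconj u g), (gconj v g); split=> //; exact: homR (conj_hom g) u v.
Qed.

Lemma gnormal_closure_normal x : gnormal (gnormal_closure (gsetT G) x) (gsetT G).
Proof.
apply: gnormalT => [|y g]; first exact: ggen_subgroup.
by apply: (hom_ggen (conj_hom g)) => _ [h [_ ->]]; exists (h * g); rewrite gconjM.
Qed.

Lemma cyclic_subgroup y : gsubgroup (fun z => exists k, z = gpowz y k).
Proof.
split=> [|_ _ [k ->] [l ->]|_ [k ->]]; first by exists 0%R.
- by exists (k + l)%R; rewrite gpowzD.
- by exists (- k)%R; rewrite gpowzN.
Qed.

Lemma central_mod_subgroup S : gsubgroup S ->
  gsubgroup (fun x => exists2 y, S y & central (x * y^-1)).
Proof.
move=> sgS; split.
- by exists 1; [exact: gsubgroup1 | rewrite invg1 mulg1; exact: central1].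
- move=> x x' [y Sy cxy] [y' Sy' cxy']; exists (y * y'); first exact: gsubgroupM.
  have -> : x * x' * (y * y')^-1 = x' * y'^-1 * (x * y^-1).
    by rewrite invMg mulgA -(mulgA x x') -(cxy' x) -mulgA.
  exact: centralM.
- move=> x [y Sy cxy]; exists y^-1; first exact: gsubgroupV.
  have -> : x^-1 * y^-1^-1 = gconj (x * y^-1)^-1 y.
    by rewrite /gconj invMg !invgK !mulgA mulVg mul1g.
  by rewrite gconj_central //; exact: centralV.
Qed.

End NormalSubgroups.

Lemma proj1_sig_inj (A : Type) (P : A -> Prop) (u v : sig P) : proj1_sig u = proj1_sig v -> u = v.
Proof. by case: u v => u Pu [v Pv] /= euv; subst v; congr exist; exact: proof_irrelevance. Qed.

Section Quotient.
Variables (G : group) (N : G -> Prop).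
Hypothesis nN : gnormal N (gsetT G).
Local Open Scope grp_scope.

Let sgN : gsubgroup N. Proof. by case: nN. Qed.
Let NJ x g : N x -> N (gconj x g). Proof. by case: nN => _ _ nNJ Nx; exact: nNJ. Qed.

(* Elements of G / N are the right cosets [N x], as predicates. *)
Definition coset (x : G) : G -> Prop := fun y => N (y * x^-1).
Definition quot_carrier := {P : G -> Prop | exists x, P = coset x}.
Definition qpi (x : G) : quot_carrier := exist _ (coset x) (ex_intro _ x erefl).
Definition qrep (P : quot_carrier) : G :=
  proj1_sig (constructive_indefinite_description _ (proj2_sig P)).

Lemma qpi_rep P : qpi (qrep P) = P.
Proof.
rewrite /qrep; case: constructive_indefinite_description => x /=.
by case: P => P hP /= ePx; apply: proj1_sig_inj.
Qed.

Lemma qpiP x y : qpi x = qpi y <-> N (x * y^-1).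
Proof.
split=> [/(congr1 (@proj1_sig _ _)) /= exy | Nxy].
  by rewrite -/(coset y x) -exy /coset mulgV; exact: gsubgroup1.
have exy : coset x = coset y.
  apply: functional_extensionality => z; apply: propositional_extensionality.
  rewrite /coset; split=> Nz.
    have -> : z * y^-1 = z * x^-1 * (x * y^-1) by rewrite -mulgA mulKg.
    exact: gsubgroupM.
  have -> : z * x^-1 = z * y^-1 * (x * y^-1)^-1 by rewrite invMg invgK -mulgA mulKg.
  by apply: gsubgroupM => //; exact: gsubgroupV.
exact: proj1_sig_inj.
Qed.

Lemma qpiM x x' y y' : qpi x = qpi x' -> qpi y = qpi y' -> qpi (x * y) = qpi (x' * y').
Proof.
move=> /qpiP Nx /qpiP Ny; apply/qpiP.
have -> : x * y * (x' * y')^-1 = gconj (y * y'^-1) x^-1 * (x * x'^-1).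
  by rewrite /gconj invgK invMg !mulgA mulgVK.
exact: gsubgroupM (NJ _ Ny) Nx.
Qed.

Lemma qpiV x x' : qpi x = qpi x' -> qpi x^-1 = qpi x'^-1.
Proof.
move=> /qpiP Nx; apply/qpiP.
have -> : x^-1 * x'^-1^-1 = gconj (x * x'^-1)^-1 x by rewrite /gconj invMg !invgK !mulgA mulgVK.
by apply: NJ; exact: gsubgroupV.
Qed.

Definition qmul P Q := qpi (qrep P * qrep Q).
Definition qinv P := qpi (qrep P)^-1.
Definition qone := qpi 1.

Lemma qmulE x y : qmul (qpi x) (qpi y) = qpi (x * y). Proof. by apply: qpiM; rewrite qpi_rep. Qed.
Lemma qinvE x : qinv (qpi x) = qpi x^-1. Proof. by apply: qpiV; rewrite qpi_rep. Qed.

Lemma qmulA P Q R : qmul P (qmul Q R) = qmul (qmul P Q) R.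
Proof. by rewrite -(qpi_rep P) -(qpi_rep Q) -(qpi_rep R) !qmulE mulgA. Qed.
Lemma qmul1 P : qmul qone P = P. Proof. by rewrite -(qpi_rep P) qmulE mul1g. Qed.
Lemma qmulV P : qmul (qinv P) P = qone. Proof. by rewrite -(qpi_rep P) qinvE qmulE mulVg. Qed.

Definition quotient_group : group := @Defs.Group quot_carrier qmul qinv qone qmulA qmul1 qmulV.
Definition qproj : G -> quotient_group := qpi.

Lemma qproj_hom : is_hom qproj. Proof. by move=> x y; rewrite /qproj /= qmulE. Qed.
Lemma qproj_eq x y : qproj x = qproj y <-> N (x * y^-1). Proof. exact: qpiP. Qed.
Lemma qproj_eq1 x : qproj x = 1 <-> N x. Proof. by rewrite qproj_eq invg1 mulg1. Qed.

End Quotient.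

Definition int_group : group :=
  @Defs.Group int +%R (fun x => - x)%R 0%R (@addrA _) (@add0r _) (@addNr _).

Lemma int_group_pown (u : int_group) n : gpown u n = (n%:Z * u)%R.
Proof.
elim: n => [|n IH]; first by rewrite mul0r.
by rewrite gpownS IH /= -addn1 PoszD mulrDl mul1r addrC.
Qed.

Lemma int_group_powz (u : int_group) k : gpowz u k = (k * u)%R.
Proof. by case: k => n; rewrite /gpowz int_group_pown // NegzE mulNr. Qed.

Lemma Zr_group_pown r (u : Zr_group r) n : nat_of_ord (gpown u n) = (n * u) %% (r.-1).+1.
Proof. by elim: n => [|n IH]; rewrite ?mul0n ?mod0n //= IH modnDmr mulSn. Qed.

Lemma coprime_inv_mod m n : 0 < m -> coprime m n -> exists k j, m * k = 1 + j * n.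
Proof.
move=> m_gt0 /eqP cmn; have [j _ ] := Bezoutl n m_gt0; rewrite cmn => dvd_m.
by exists ((1 + j * n) %/ m), j; rewrite mulnC divnK.
Qed.

Section TorusRelation.
Variables (K : group) (A B : K) (p q : nat) (p1 q1 : int).
Hypotheses (eAB : gpown A p = gpown B q) (bezout : (p%:Z * p1 + q%:Z * q1 = 1)%R).
Local Open Scope grp_scope.

Lemma gpown_powzM k l n : gcommute A B ->
  (gpowz A k * gpowz B l) ^+ n = gpowz (A ^+ n) k * gpowz (B ^+ n) l.
Proof.
move=> cAB; have cAkBl : gcommute (gpowz A k) (gpowz B l) by apply/commuteXz/commute_sym/commuteXz.
rewrite gpownMn // -!gpowzMn -!(gpowz_nat _ n) -!gpowzM.
by rewrite (mulrC k) (mulrC l).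
Qed.

(* Abelian quotients of the torus knot group are cyclic, generated by the image of [a^q1 b^p1]. *)
Lemma abelian_torus_root : gcommute A B ->
  (gpowz A q1 * gpowz B p1) ^+ q = A /\ (gpowz A q1 * gpowz B p1) ^+ p = B.
Proof.
move=> cAB; have eApBq k : gpowz A (p%:Z * k)%R = gpowz B (q%:Z * k)%R.
  by rewrite !gpowzM !gpowz_nat eAB.
rewrite !gpown_powzM // -!(gpowz_nat _ q) -!(gpowz_nat _ p) -!gpowzM; split.
- by rewrite -eApBq -gpowzD addrC bezout gpowz1.
- by rewrite eApBq -gpowzD addrC bezout gpowz1.
Qed.

(* [A = A^(u r q1 + v p)], and both [A^(r q1) = B^(-r p1)] and [A^p = B^q] commute with [B]. *)
Lemma commute_of_torus_root r : coprime r p ->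
  gpowz (A ^+ r) q1 * gpowz (B ^+ r) p1 = 1 -> gcommute A B.
Proof.
move=> crp eX.
have [[u v] /= euv] : exists uv : int * int, (uv.1 * (r%:Z * q1) + uv.2 * p%:Z = 1)%R.
  apply/coprimezP; rewrite coprimezMl coprimezE crp /=.
  by apply/coprimezP; exists (Posz q, p1); rewrite /= addrC (mulrC p1).
have eU : gpowz A (r%:Z * q1)%R = (gpowz (B ^+ r) p1)^-1.
  by rewrite gpowzM gpowz_nat; apply: (@mulIg _ (gpowz (B ^+ r) p1)); rewrite mulVg.
have cUB : gcommute (gpowz A (r%:Z * q1)%R) B by rewrite eU; exact/commuteV/commuteXz/commuteX.
have cApB : gcommute (A ^+ p) B by rewrite eAB; exact: commuteX.
rewrite -[A]gpowz1 -euv gpowzD (mulrC u) (mulrC v) (gpowzM A _ u) (gpowzM A _ v).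
by rewrite (gpowz_nat A p); apply: commuteM; apply: commuteXz.
Qed.

End TorusRelation.

Section SymmetricGroup.
Variable X : Type.

Record bijection := Bijection {
  bij_fun : X -> X; bij_inv : X -> X;
  bij_funK : cancel bij_fun bij_inv; bij_invK : cancel bij_inv bij_fun }.

Lemma bijection_ext (s t : bijection) : bij_fun s =1 bij_fun t -> s = t.
Proof.
case: s t => f g fK gK [f' g' fK' gK'] /= /functional_extensionality eff'; subst f'.
have egg' : g = g' by apply: functional_extensionality => x; rewrite -{1}(gK' x) fK.
by subst g'; congr Bijection; exact: proof_irrelevance.
Qed.

Definition bij_mul (s t : bijection) : bijection.
Proof.
refine (@Bijection (bij_fun s \o bij_fun t) (bij_inv t \o bij_inv s) _ _) => x /=.
- by rewrite !bij_funK.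
- by rewrite !bij_invK.
Defined.
Definition bij_inverse (s : bijection) := Bijection (bij_invK s) (bij_funK s).
Definition bij_id := @Bijection id id (frefl _) (frefl _).

Lemma bij_mulA : associative bij_mul. Proof. by move=> *; exact: bijection_ext. Qed.
Lemma bij_mul1 : left_id bij_id bij_mul. Proof. by move=> *; exact: bijection_ext. Qed.
Lemma bij_mulV s : bij_mul (bij_inverse s) s = bij_id.
Proof. by apply: bijection_ext => x /=; rewrite bij_funK. Qed.

Definition sym_group : group :=
  @Defs.Group bijection bij_mul bij_inverse bij_id bij_mulA bij_mul1 bij_mulV.

Lemma sym_group_pown (s : sym_group) n x : bij_fun (gpown s n) x = iter n (bij_fun s) x.
Proof. by elim: n => //= n IH; rewrite IH. Qed.

Section CyclicBijection.
Variables (f : X -> X) (n : nat).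
Hypothesis iter_f : forall x, iter n.+1 f x = x.

Definition cyclic_bij : sym_group.
Proof.
refine (@Bijection f (iter n f) _ _) => x; first by rewrite -iterSr.
by rewrite -iterS.
Defined.

Lemma cyclic_bij_order : gpown cyclic_bij n.+1 = gone.
Proof. by apply: bijection_ext => x; rewrite sym_group_pown. Qed.

End CyclicBijection.
End SymmetricGroup.

(* Normal forms in the free product [Z_p * Z_q]: a syllable [(true, e)] stands
   for [a^e] with [0 < e < p], a syllable [(false, e)] for [b^e] with [0 < e < q]. *)
Section FreeProductWords.
Variables p q : nat.
Hypotheses (p_gt1 : 1 < p) (q_gt1 : 1 < q).

Definition letter_order (l : bool) := if l then p else q.

Lemma letter_order_gt1 l : 1 < letter_order l. Proof. by case: l. Qed.
Lemma letter_order_gt0 l : 0 < letter_order l. Proof. exact: ltnW (letter_order_gt1 l). Qed.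

Definition syllable_ok (s : bool * nat) := 0 < s.2 < letter_order s.1.
Definition starts_with l (w : seq (bool * nat)) := if w is s :: _ then s.1 == l else false.
Fixpoint reduced w :=
  if w is s :: w' then [&& syllable_ok s, ~~ starts_with s.1 w' & reduced w'] else true.

Definition lmul l w :=
  match w with
  | s :: w' =>
      if s.1 == l then (if s.2.+1 == letter_order l then w' else (l, s.2.+1) :: w')
      else (l, 1) :: w
  | [::] => [:: (l, 1)]
  end.

Definition push_syllable (l : bool) e w : seq (bool * nat) := if e is 0 then w else (l, e) :: w.

Lemma reduced_lmul l w : reduced w -> reduced (lmul l w).
Proof.
case: w => [|[l' e] w] /=; first by rewrite /syllable_ok /= letter_order_gt1.
case/and3P=> /andP[e_gt0 lt_e] nst rw; case: eqP => [<- | /eqP nl].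
  case: eqP => //= /eqP ne; rewrite /syllable_ok /= nst rw !andbT.
  by rewrite ltn_neqAle ne lt_e.
by rewrite /= /syllable_ok /= letter_order_gt1 e_gt0 lt_e nst rw nl.
Qed.

Lemma lmul_push l e w : e < letter_order l -> ~~ starts_with l w ->
  lmul l (push_syllable l e w) = push_syllable l (e.+1 %% letter_order l) w.
Proof.
case: e => [|e] lt_e nst /=.
  by rewrite modn_small ?letter_order_gt1 //; case: w nst => [|[l' e'] w] //= /negbTE ->.
rewrite eqxx; case: eqP => [-> | ne]; first by rewrite modnn.
by rewrite modn_small // ltn_neqAle lt_e andbT; apply/eqP.
Qed.

Lemma iter_lmul_push l e w n : e < letter_order l -> ~~ starts_with l w ->
  iter n (lmul l) (push_syllable l e w) = push_syllable l ((e + n) %% letter_order l) w.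
Proof.
move=> lt_e nst; elim: n => [|n IH]; first by rewrite addn0 modn_small.
rewrite iterS IH lmul_push ?ltn_pmod ?letter_order_gt0 //.
by rewrite -addn1 modnDml addn1 addnS.
Qed.

Lemma reduced_push_split l w : reduced w ->
  exists e w', [/\ e < letter_order l, ~~ starts_with l w', reduced w' & w = push_syllable l e w'].
Proof.
case: w => [|[l' e] w] /=; first by exists 0, [::]; rewrite letter_order_gt0.
case/and3P=> /andP[e_gt0 lt_e] nst rw; case: (eqVneq l' l) => [el | nl].
  by subst l'; exists e, w; split=> //; case: e e_gt0 {lt_e}.
exists 0, ((l', e) :: w); rewrite letter_order_gt0 /= nl.
by rewrite /syllable_ok /= e_gt0 lt_e nst rw.
Qed.

Lemma iter_lmul_order l w : reduced w -> iter (letter_order l) (lmul l) w = w.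
Proof.
move=> /(reduced_push_split l) [e [w' [lt_e nst _ ->]]].
by rewrite iter_lmul_push // modnDr modn_small.
Qed.

Lemma reduced_rcons w s l : reduced (rcons w s) -> s.1 != l ->
  reduced (rcons (rcons w s) (l, 1)).
Proof.
elim: w => [|s' w IH] /=.
  by rewrite andbT => -> ns; rewrite /syllable_ok /= letter_order_gt1 eq_sym ns.
case/and3P=> ok_s' nst rw ns; rewrite ok_s' IH // andbT.
by case: w nst {IH rw}.
Qed.

Lemma lmul_neq_rcons l w : w != [::] -> lmul l w != rcons w (l, 1).
Proof.
case: w => [|[l' e] w] // _ /=; case: (eqVneq l' l) => [-> | nl].
  case: ifP => _; apply/eqP; last by case=> /eqP; rewrite gtn_eqF.
  by move=> /(congr1 size); rewrite /= size_rcons => /eqP; rewrite (ltn_eqF (ltnW (ltnSn _))).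
by apply/eqP => [[el]]; rewrite el eqxx in nl.
Qed.

Definition rword := {w | reduced w}.
Definition rlmul l (w : rword) : rword := exist _ (lmul l (val w)) (reduced_lmul l (valP w)).

Lemma val_iter_rlmul l n (w : rword) : val (iter n (rlmul l) w) = iter n (lmul l) (val w).
Proof. by elim: n => //= n ->. Qed.

Lemma iter_rlmul_order l (w : rword) : iter (letter_order l).-1.+1 (rlmul l) w = w.
Proof.
apply: proj1_sig_inj; rewrite val_iter_rlmul prednK ?letter_order_gt0 //.
exact: iter_lmul_order (valP w).
Qed.

Definition letter_bij l : sym_group rword := cyclic_bij (iter_rlmul_order l).

Lemma letter_bij_order l : gpown (letter_bij l) (letter_order l) = gone.
Proof. by rewrite -(prednK (letter_order_gt0 l)) cyclic_bij_order. Qed.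

End FreeProductWords.

(** * The torus knot group *)

Section TorusKnotGroup.
Variables (p q : nat) (T : group) (a b : T).
Hypotheses (p_gt1 : 1 < p) (q_gt1 : 1 < q).
Hypothesis presT : torus_presentation p q a b.
Local Open Scope grp_scope.
Local Notation c := (a ^+ p).

Lemma torus_rel : a ^+ p = b ^+ q. Proof. by case: presT. Qed.

Lemma torus_ind S : gsubgroup S -> S a -> S b -> forall x, S x.
Proof. by case: presT => _ genT _ sgS Sa Sb x; apply: genT => // _ [->|->]. Qed.

Lemma torus_univ (K : group) (u v : K) : u ^+ p = v ^+ q ->
  exists f : T -> K, [/\ is_hom f, f a = u & f b = v].
Proof. by case: presT => _ _; apply. Qed.

Lemma central_c : central c.
Proof.
move=> x; apply: commute_sym; move: x; apply: torus_ind.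
- by split=> [|x y|x]; [exact: commute1 | exact: commuteM | exact: commuteV].
- exact/commute_sym/commuteX.
- by rewrite torus_rel; exact/commute_sym/commuteX.
Qed.

(* [a |-> q], [b |-> p] maps [c] to [pq] in [Z]. *)
Lemma gpowz_c_eq1 k : gpowz c k = 1 -> k = 0%R.
Proof.
have [|e [home ea eb] ck1] := @torus_univ int_group q p.
  by rewrite !int_group_pown mulrC.
move: (congr1 e ck1); rewrite homXz // homX // hom1 // ea int_group_powz int_group_pown.
move=> /eqP; rewrite mulf_eq0 -PoszM eqz_nat muln_eq0 => /orP[/eqP // |].
by rewrite !gtn_eqF ?(ltnW p_gt1) ?(ltnW q_gt1).
Qed.

Definition letter (l : bool) := if l then a else b.

Fixpoint word_val (w : seq (bool * nat)) : T :=
  if w is s :: w' then letter s.1 ^+ s.2 * word_val w' else 1.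

Lemma letter_order_c l : letter l ^+ letter_order p q l = c.
Proof. by case: l => //=; rewrite torus_rel. Qed.

Lemma letterV l : (letter l)^-1 = letter l ^+ (letter_order p q l).-1 * c^-1.
Proof.
apply: mulg1_eq; rewrite mulgA -gpownS prednK ?letter_order_gt0 //.
by rewrite letter_order_c mulgV.
Qed.

Lemma word_val_lmul l w : reduced p q w ->
  exists d, letter l * word_val w = word_val (lmul p q l w) * c ^+ d.
Proof.
case: w => [|[l' e] w] rw; first by exists 0; rewrite /= !mulg1.
rewrite [lmul _ _ _ _]/=; case: eqP => [<- | _]; last by exists 0; rewrite /= !mulg1.
case: eqP => [eo | _]; last by exists 0; rewrite /= mulgA -gpownS mulg1.
exists 1%N; rewrite gpown1 /= mulgA -gpownS eo letter_order_c.
exact: central_c.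
Qed.

Definition has_normal_form x := exists w k, reduced p q w /\ x = word_val w * gpowz c k.

Lemma normal_form_letterM l y : has_normal_form y -> has_normal_form (letter l * y).
Proof.
case=> w [k [rw ->]]; have [d ed] := word_val_lmul l rw.
exists (lmul p q l w), (d%:Z + k)%R; split; first exact: reduced_lmul.
by rewrite mulgA ed gpowzD -mulgA.
Qed.

Lemma normal_form_letterXM l n y : has_normal_form y -> has_normal_form (letter l ^+ n * y).
Proof. by move=> ny; elim: n => [|n IH]; rewrite ?mul1g // -mulgA; exact: normal_form_letterM. Qed.

Lemma normal_form_cVM y : has_normal_form y -> has_normal_form (c^-1 * y).
Proof.
case=> w [k [rw ->]]; exists w, (-1 + k)%R; split=> //.
by rewrite gpowzD gpowzN gpowz1 mulgA (centralV central_c) mulgA.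
Qed.

(* Left multiplication by [x] and by [x^-1] both preserve normal forms, for
   every [x], since this is so for the generators. *)
Lemma torus_normal_form x : has_normal_form x.
Proof.
suff nfM : forall x y, has_normal_form y ->
    has_normal_form (x * y) /\ has_normal_form (x^-1 * y).
  rewrite -(mulg1 x); apply: (proj1 (nfM x 1 _)).
  by exists [::], 0%R; rewrite /= mulg1.
apply: torus_ind.
- split=> [y ny|u v nfu nfv y ny|u nfu y ny]; rewrite ?invg1 ?mul1g //.
  + rewrite invMg -!mulgA; split; first by apply: (proj1 (nfu _ _)); apply: (proj1 (nfv _ _)).
    by apply: (proj2 (nfv _ _)); apply: (proj2 (nfu _ _)).
  + by rewrite invgK; split; [apply: (proj2 (nfu _ _)) | apply: (proj1 (nfu _ _))].
- by move=> y ny; split; [exact: (normal_form_letterM true) |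
     rewrite (letterV true) -mulgA; apply: normal_form_letterXM; exact: normal_form_cVM].
- by move=> y ny; split; [exact: (normal_form_letterM false) |
     rewrite (letterV false) -mulgA; apply: normal_form_letterXM; exact: normal_form_cVM].
Qed.

Section FaithfulOnWords.
Variable rho : T -> sym_group (rword p q).
Hypothesis homrho : is_hom rho.
Hypothesis rho_letter : forall l, rho (letter l) = letter_bij p_gt1 q_gt1 l.

Lemma rho_word_val w (v : rword p q) : reduced p q (w ++ val v) ->
  val (bij_fun (rho (word_val w)) v) = w ++ val v.
Proof.
elim: w => [|[l e] w IH] /= rwv; first by rewrite hom1.
case/and3P: rwv => /andP[e_gt0 lt_e] nst rwv.
rewrite homrho homX // rho_letter /= sym_group_pown.
change (bij_fun (letter_bij p_gt1 q_gt1 l)) with (rlmul p_gt1 q_gt1 l).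
rewrite val_iter_rlmul IH //.
have := @iter_lmul_push _ _ p_gt1 q_gt1 l 0 (w ++ val v) e (letter_order_gt0 _ _ l) nst.
by rewrite add0n modn_small //= => ->; case: e e_gt0 {lt_e}.
Qed.

(* A central word [w s] commutes with the letter [l != s.1]; acting on the empty
   word this would give [lmul l (w s) = w s l], which is not the case. *)
Lemma central_word_val w : reduced p q w -> central (word_val w) -> w = [::].
Proof.
case/lastP: w => // w s rws cws; pose l := ~~ s.1.
have ns : s.1 != l by rewrite /l; case: s.1.
have crho v : bij_fun (rho (word_val (rcons w s) * letter l)) v
             = bij_fun (rho (letter l * word_val (rcons w s))) v by rewrite cws.
pose nil_word : rword p q := exist _ [::] isT.
have e1 : val (bij_fun (rho (word_val (rcons w s))) nil_word) = rcons w s.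
  by rewrite rho_word_val ?cats0.
have e2 : val (bij_fun (rho (word_val (rcons w s))) (bij_fun (letter_bij p_gt1 q_gt1 l) nil_word))
          = rcons (rcons w s) (l, 1%N).
  by rewrite rho_word_val /= cats1 //; exact: reduced_rcons.
move: (congr1 val (crho nil_word)); rewrite !homrho /= rho_letter e2 /= e1 => /esym/eqP.
by rewrite (negbTE (lmul_neq_rcons _ _ _ _)) // -size_eq0 size_rcons.
Qed.

End FaithfulOnWords.

Lemma central_torus z : central z -> exists k, z = gpowz c k.
Proof.
move=> cz; have [w [k [rw ez]]] := torus_normal_form z; exists k.
have [|rho [homrho rho_a rho_b]] :=
  @torus_univ _ (letter_bij p_gt1 q_gt1 true) (letter_bij p_gt1 q_gt1 false).
  by rewrite !letter_bij_order.
have rho_letter l : rho (letter l) = letter_bij p_gt1 q_gt1 l by case: l.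
suff w0 : w = [::] by rewrite ez w0 mul1g.
apply: (central_word_val homrho rho_letter rw).
have -> : word_val w = z * (gpowz c k)^-1 by rewrite ez mulgK.
exact/(centralM cz)/centralV/centralXz/central_c.
Qed.

Lemma torus_mod_cyclic N g : gnormal N (gsetT T) ->
  (exists k, N (a * (gpowz g k)^-1)) -> (exists k, N (b * (gpowz g k)^-1)) ->
  forall x, exists k, N (x * (gpowz g k)^-1).
Proof.
move=> nN [ka Na] [kb Nb]; have homq := qproj_hom nN.
have modN y k : N (y * (gpowz g k)^-1) <-> qproj nN y = gpowz (qproj nN g) k.
  by rewrite -homXz // qproj_eq.
suff qcyc x : exists k, qproj nN x = gpowz (qproj nN g) k.
  by move=> x; have [k ek] := qcyc x; exists k; apply/modN.
move: x; apply: torus_ind; first exact: (preim_subgroup homq (cyclic_subgroup _)).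
- by exists ka; apply/modN.
- by exists kb; apply/modN.
Qed.

Section Abelianization.
Variables p1 q1 : int.
Hypothesis bezout : (p%:Z * p1 + q%:Z * q1 = 1)%R.

Lemma torus_abelianization_cyclic x :
  exists k, gderived (gsetT T) (x * (gpowz (gpowz a q1 * gpowz b p1) k)^-1).
Proof.
have nT := @gderived_normal T; have homq := qproj_hom nT.
have cab : gcommute (qproj nT a) (qproj nT b).
  by apply: commute_of_gcomm; rewrite -homR //; apply/qproj_eq1; exact: gcomm_derived.
have eab : qproj nT a ^+ p = qproj nT b ^+ q by rewrite -!homX // torus_rel.
have [ea eb] := abelian_torus_root eab bezout cab.
apply: torus_mod_cyclic => //; [exists (Posz q) | exists (Posz p)]; apply/qproj_eq;
  by rewrite gpowz_nat (homX homq) homq !(homXz homq) ?ea ?eb.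
Qed.

End Abelianization.

(** * The subgroup [G_r] *)

Section PowerSubgroup.
Variable r : nat.
Hypotheses (r_gt0 : 0 < r) (crp : coprime r p) (crq : coprime r q).
Local Notation ar := (a ^+ r).
Local Notation br := (b ^+ r).
Local Notation Gr := (ggen (fun z => z = ar \/ z = br)).

Lemma Gr_subgroup : gsubgroup Gr. Proof. exact: ggen_subgroup. Qed.
Lemma Gr_ar : Gr ar. Proof. by apply: ggen_in; left. Qed.
Lemma Gr_br : Gr br. Proof. by apply: ggen_in; right. Qed.

Lemma Gr_cr : Gr (c ^+ r).
Proof. by rewrite -gpownM mulnC gpownM; exact: (gsubgroupX Gr_subgroup p Gr_ar). Qed.

(* [T = Z(T) G_r]: a generator [g] with [g^n = c] is [(g^r)^m c^-j] when [rm = 1 + jn]. *)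
Lemma torus_mod_center_Gr x : exists2 y, Gr y & central (x * y^-1).
Proof.
have gen g n : Gr (g ^+ r) -> g ^+ n = c -> coprime r n -> exists2 y, Gr y & central (g * y^-1).
  move=> Grg gnc crn; have [m [j erm]] := coprime_inv_mod r_gt0 crn.
  exists ((g ^+ r) ^+ m); first exact: (gsubgroupX Gr_subgroup m Grg).
  have cj : central (c ^+ j) by exact: centralX central_c.
  rewrite -gpownM erm gpownD gpown1 mulnC gpownM gnc invMg mulgA -(centralV cj g) mulgK.
  exact: centralV.
move: x; apply: torus_ind; first exact: central_mod_subgroup Gr_subgroup.
- exact: gen Gr_ar erefl crp.
- exact: gen Gr_br (esym torus_rel) crq.
Qed.

Lemma Gr_normal : gnormal Gr (gsetT T).
Proof.
apply: gnormalT => [|x g Grx]; first exact: Gr_subgroup.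
have [y Gry cgy] := torus_mod_center_Gr g.
by rewrite -(mulgVK g y) gconjMl //; exact: (gsubgroupJ Gr_subgroup Grx Gry).
Qed.

Lemma gcenter_Gr_central z : gcenter Gr z -> central z.
Proof.
move=> [_ cz] x; have [y Gry cxy] := torus_mod_center_Gr x.
by rewrite -(mulgVK x y) /gcommute mulgA -(cxy z) -mulgA (cz y Gry) mulgA.
Qed.

Lemma gderived_Gr : gsame_set (gderived Gr) (gderived (gsetT T)).
Proof.
move=> t; split; first exact: gderived_mono.
apply: ggen_min t; first exact: ggen_subgroup.
move=> _ [x [y [_ _ ->]]].
have [x' Grx' cx] := torus_mod_center_Gr x; have [y' Gry' cy] := torus_mod_center_Gr y.
by rewrite -(mulgVK x x') -(mulgVK y y') gcommMl // gcommMr //; exact: gcomm_derived.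
Qed.

(* [T / G_r = Z_r]: [a |-> q m] and [b |-> p m] with [pqm = 1 (mod r)], so that [c |-> 1]. *)
Lemma Zr_character :
  exists psi : T -> Zr_group r, [/\ is_hom psi, forall x, Gr x -> psi x = gone
    & forall n, nat_of_ord (psi (c ^+ n)) = n %% r].
Proof.
have crpq : coprime (p * q) r by rewrite coprimeMl !(coprime_sym _ r) crp crq.
have pq_gt0 : 0 < p * q by rewrite muln_gt0 (ltnW p_gt1) (ltnW q_gt1).
have [m [j em]] := coprime_inv_mod pq_gt0 crpq.
have er : (r.-1).+1 = r := prednK r_gt0.
have [|psi [hompsi psia psib]] :=
  @torus_univ (Zr_group r) (inZp (q * m)) (inZp (p * m)).
  by apply: val_inj; rewrite /= !Zr_group_pown /= !modnMmr mulnCA.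
have psiX g u n : psi g = inZp u -> nat_of_ord (psi (g ^+ n)) = (n * u) %% r.
  by move=> eg; rewrite homX // Zr_group_pown eg /= modnMmr er.
exists psi; split=> // [|n].
  apply: ggen_min; first exact: (preim_subgroup hompsi (trivial_subgroup _)).
  by move=> _ [->|->]; apply: ord_inj; rewrite ?(psiX _ _ _ psia) ?(psiX _ _ _ psib) modnMr.
rewrite -gpownM (psiX _ _ _ psia) [(p * n)%N]mulnC -mulnA (mulnA p q m) em.
by rewrite mulnDr muln1 mulnA addnC modnMDl.
Qed.

Lemma Gr_c_pown n : Gr (c ^+ n) <-> r %| n.
Proof.
split=> [Grcn | /dvdnP [k ->]]; last first.
  by rewrite mulnC gpownM; exact: (gsubgroupX Gr_subgroup k Gr_cr).
have [psi [_ psiGr psic]] := Zr_character.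
by move: (congr1 (@nat_of_ord _) (psiGr _ Grcn)); rewrite psic => /eqP.
Qed.

Lemma torus_mod_Gr x : exists k, Gr (x * (gpowz c k)^-1).
Proof.
have gen g n : g ^+ n = c -> Gr (g ^+ r) -> 0 < n -> coprime n r ->
    exists k, Gr (g * (gpowz c k)^-1).
  move=> gnc Grg n_gt0 cnr; have [u [j enu]] := coprime_inv_mod n_gt0 cnr.
  exists (Posz u); rewrite gpowz_nat -gnc -gpownM enu add1n gpownSr invMg mulVKg.
  by apply: (gsubgroupV Gr_subgroup); rewrite mulnC gpownM; exact: (gsubgroupX Gr_subgroup j Grg).
apply: torus_mod_cyclic Gr_normal _ _ x.
- by apply: gen Gr_ar (ltnW p_gt1) _ => //; rewrite coprime_sym.
- by apply: gen (esym torus_rel) Gr_br (ltnW q_gt1) _; rewrite coprime_sym.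
Qed.

Lemma Zr_quotient : exists psi : T -> Zr_group r, [/\ is_hom psi,
  forall x, psi x = gone <-> Gr x & forall k : Zr_group r, psi (c ^+ k) = k].
Proof.
have [psi [hompsi psiGr psic]] := Zr_character.
exists psi; split=> // [x | k]; last first.
  by apply: ord_inj; rewrite psic modn_small // -{2}(prednK r_gt0).
split=> [psix1 | ]; last exact: psiGr.
have [k Grxc] := torus_mod_Gr x.
suff Grc : Gr (gpowz c k).
  by rewrite -(mulgVK x (gpowz c k)); exact: (gsubgroupM Gr_subgroup Grxc Grc).
apply/(gsubgroupXz_abs Gr_subgroup _ _)/Gr_c_pown.
have psick : psi (gpowz c k) = gone.
  move: (psiGr _ Grxc); rewrite hompsi psix1 mul1g (homV hompsi) => e.
  by rewrite -[psi _]invgK e invg1.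
move: psick => /(gsubgroupXz_abs (preim_subgroup hompsi (trivial_subgroup _)) _ _).
by move=> /(congr1 (@nat_of_ord _)); rewrite psic => /eqP.
Qed.

Lemma gcenter_Gr : gsame_set (gcenter Gr) (ggen (fun z => z = c ^+ r)).
Proof.
have sgc := @ggen_subgroup T (fun z => z = c ^+ r).
move=> z; split=> [Zz | ]; last first.
  apply: ggen_min z; first exact: gcenter_subgroup Gr_subgroup.
  by move=> _ ->; split=> [|y _]; [exact: Gr_cr | exact: (centralX r central_c y)].
have [k ezk] := central_torus (gcenter_Gr_central Zz); rewrite ezk in Zz *.
case: Zz => Grc _.
have /dvdnP [m em] := iffLR (Gr_c_pown _) (iffLR (gsubgroupXz_abs Gr_subgroup _ _) Grc).
apply: (iffRL (gsubgroupXz_abs sgc _ _)); rewrite em mulnC gpownM.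
by apply: (gsubgroupX sgc m); exact: ggen_in.
Qed.

Lemma gcenter_Gr_sub : gsubset (gcenter Gr) (gcenter (gsetT T)).
Proof. by move=> z /gcenter_Gr_central; exact: central_gcenterT. Qed.

Lemma Gr_quotient_iso : quotient_iso (gsetT T) Gr (Zr_group r).
Proof.
have [psi [hompsi kerpsi psic]] := Zr_quotient.
by exists psi; split=> [x y _ _|k|x _]; [exact: hompsi | exists (c ^+ k) | exact: kerpsi].
Qed.

Lemma Gr_derived_quotient_iso : quotient2_iso (gsetT T) (gderived (gsetT T)) Gr (Zr_group r).
Proof.
have [psi [hompsi kerpsi psic]] := Zr_quotient.
exists psi; split=> [x y _ _|k|x _]; [exact: hompsi | by exists (c ^+ k) |].
rewrite kerpsi; split=> [Grx | [y [Gry Txy]]].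
  by exists x; rewrite mulgV; split=> //; exact: gsubgroup1 (ggen_subgroup _).
rewrite -(mulgVK x y); apply: (gsubgroupM Gr_subgroup _ Gry).
exact: (gderived_sub Gr_subgroup (iffRL (gderived_Gr _) Txy)).
Qed.

Lemma center_quotient_iso : quotient_iso (gcenter (gsetT T)) (gcenter Gr) (Zr_group r).
Proof.
have [psi [hompsi kerpsi psic]] := Zr_quotient.
exists psi; split=> [x y _ _|k|x [_ cx]]; first exact: hompsi.
  by exists (c ^+ k); split; [apply/central_gcenterT/centralX/central_c | exact: psic].
by rewrite kerpsi; split=> [Grx | [//]]; split=> // y _; exact: cx.
Qed.

Section PowerEmbedding.
Variable f : T -> T.
Hypotheses (homf : is_hom f) (fa : f a = ar) (fb : f b = br).

Lemma Gr_image y : Gr y <-> exists x, f x = y.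
Proof.
split; last first.
  by case=> x <-; move: x; apply: torus_ind; rewrite ?fa ?fb;
     [exact: (preim_subgroup homf Gr_subgroup) | exact: Gr_ar | exact: Gr_br].
by apply: (ggen_min (image_subgroup homf)) y => _ [->|->]; [exists a | exists b].
Qed.

(* [a |-> a^m], [b |-> b^m] with [rm = 1 + jpq] inverts [f] up to a central factor. *)
Lemma inverse_mod_center :
  exists g : T -> T, is_hom g /\ forall x, exists k, g (f x) = x * gpowz c k.
Proof.
have crpq : coprime r (p * q) by rewrite coprimeMr crp crq.
have [m [j erm]] := coprime_inv_mod r_gt0 crpq.
have [|g [homg ga gb]] := @torus_univ T (a ^+ m) (b ^+ m).
  by rewrite -!gpownM mulnC gpownM torus_rel -gpownM mulnC.
exists g; split=> //; apply: torus_ind.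
- split=> [|x y [k ek] [l el]|x [k ek]].
  + by exists 0%R; rewrite (hom1 homf) (hom1 homg) mul1g.
  + exists (k + l)%R; rewrite homf homg ek el gpowzD -mulgA (mulgA (gpowz c k)).
    by rewrite (centralXz k central_c y) !mulgA.
  + exists (- k)%R; rewrite !homV // ek invMg gpowzN.
    exact: (centralV (centralXz k central_c) x^-1).
- exists (Posz (j * q)); rewrite fa homX // ga -gpownM mulnC erm gpownD gpown1.
  by rewrite gpowz_nat -gpownM mulnCA.
- exists (Posz (j * p)); rewrite fb homX // gb -gpownM mulnC erm gpownD gpown1.
  by rewrite gpowz_nat torus_rel -gpownM (mulnC p q) mulnCA.
Qed.

Lemma Gr_embedding_inj x y : f x = f y -> x = y.
Proof.
move=> fxy; apply: divg1_eq; set t := x * y^-1.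
have ft1 : f t = 1 by rewrite /t homf (homV homf) fxy mulgV.
have [g [homg gf]] := inverse_mod_center; have [k] := gf t.
rewrite ft1 (hom1 homg) => /esym/mulg1_eq/(congr1 ginv); rewrite invgK -gpowzN => ect.
have fc : f c = gpowz c (Posz r) by rewrite (homX homf) fa -gpownM mulnC gpownM.
move: ft1; rewrite ect (homXz homf) fc -gpowzM => /gpowz_c_eq1 /eqP.
rewrite mulf_eq0 eqz_nat => /orP[/eqP r0 | /eqP nk0]; last by rewrite nk0.
by move: r_gt0; rewrite r0.
Qed.

End PowerEmbedding.

Lemma Gr_embedding : exists f : T -> T,
  [/\ is_hom f, f a = ar, f b = br, (forall x y, f x = f y -> x = y)
    & (forall y, Gr y <-> exists x, f x = y)].
Proof.
have [|f [homf fa fb]] := @torus_univ T ar br.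
  by rewrite -!gpownM mulnC gpownM torus_rel -gpownM mulnC.
by exists f; split=> //; [exact: Gr_embedding_inj | exact: Gr_image].
Qed.

Section TorusRoot.
Variables p1 q1 : int.
Hypothesis bezout : (p%:Z * p1 + q%:Z * q1 = 1)%R.
Local Notation xr := (gpowz ar q1 * gpowz br p1).

Lemma Gr_xr : Gr xr.
Proof.
apply: (gsubgroupM Gr_subgroup).
- exact: (gsubgroupXz Gr_subgroup q1 Gr_ar).
- exact: (gsubgroupXz Gr_subgroup p1 Gr_br).
Qed.

Lemma Gr_abelianization_cyclic y : Gr y -> exists k, gderived Gr (y * (gpowz xr k)^-1).
Proof.
have [f [homf fa fb _ imf]] := Gr_embedding.
move=> /imf [t <-]; have [k Tk] := torus_abelianization_cyclic bezout t; exists k.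
have <- : f (gpowz a q1 * gpowz b p1) = xr by rewrite homf !(homXz homf) fa fb.
rewrite -(homXz homf) -(homV homf) -homf.
by apply: (gderived_mono _ (hom_derived homf Tk)) => z /imf.
Qed.

(* In [T / <<xr>>] the images of [a] and [b] commute, so there [xr] is the
   [r]-th power of a common root of them and [a^r = b^r = 1]. *)
Lemma normal_closure_xr : gsame_set (gnormal_closure (gsetT T) xr) Gr.
Proof.
set N := gnormal_closure (gsetT T) xr; have nN : gnormal N (gsetT T) := gnormal_closure_normal xr.
move=> t; split.
  apply: (ggen_min Gr_subgroup) t => _ [g [_ ->]].
  by case: Gr_normal => _ _; apply; [exact: Gr_xr |].
have homq := qproj_hom nN; set A := qproj nN a; set B := qproj nN b.
have qxr1 : gpowz (A ^+ r) q1 * gpowz (B ^+ r) p1 = 1.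
  rewrite -!(homX homq) -!(homXz homq) -homq; apply/qproj_eq1.
  by apply: ggen_in; exists 1; rewrite gconj1.
have eAB : A ^+ p = B ^+ q by rewrite -!(homX homq) torus_rel.
have cAB := commute_of_torus_root eAB bezout crp qxr1.
have [eA eB] := abelian_torus_root eAB bezout cAB.
have Xr1 : (gpowz A q1 * gpowz B p1) ^+ r = 1 by rewrite gpown_powzM.
have qgen g n : qproj nN g = (gpowz A q1 * gpowz B p1) ^+ n -> N (g ^+ r).
  by move=> eg; apply/qproj_eq1; rewrite (homX homq) eg -gpownM mulnC gpownM Xr1 gpown1n.
apply: (ggen_min (ggen_subgroup _)) t => _ [->|->]; [exact: (qgen _ q) | exact: (qgen _ p)].
Qed.

(* Conjugation by [T = Z(T) G_r] is conjugation by [G_r]. *)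
Lemma normal_closure_xr_Gr : gsame_set (gnormal_closure Gr xr) Gr.
Proof.
move=> t; apply: iff_trans (normal_closure_xr t); split; apply: ggen_mono t => _ [g [Gg ->]].
  by exists g.
have [y Gry cgy] := torus_mod_center_Gr g.
by exists y; split=> //; rewrite -(mulgVK g y) gconjMl.
Qed.

End TorusRoot.

End PowerSubgroup.
End TorusKnotGroup.

Theorem mainTheorem18 (p q r : nat) (p1 q1 : int)
    (T : group) (a b : T)
    (hp : 2 <= p) (hq : 2 <= q) (hpq : coprime p q)
    (hr : 1 <= r) (hrp : coprime r p) (hrq : coprime r q)
    (hpres : torus_presentation p q a b)
    (hbez : (p%:Z * p1 + q%:Z * q1 = 1)%R) :
  let c := gpown a p in
  let ar := gpown a r in
  let br := gpown b r in
  let Gr := ggen (fun z => z = ar \/ z = br) in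
  let xr := gmul (gpowz ar q1) (gpowz br p1) in
  (exists f : T -> T,
     [/\ is_hom f, f a = ar, f b = br,
         (forall x y, f x = f y -> x = y)
       & (forall y, Gr y <-> exists x, f x = y)]) /\
  (gsame_set (gcenter Gr) (ggen (fun z => z = gpown c r))
   /\ gsubset (gcenter Gr) (gcenter (gsetT T))) /\
  gsame_set (gderived Gr) (gderived (gsetT T)) /\
  ((forall y, Gr y -> exists k : int, gderived Gr (gmul y (ginv (gpowz xr k))))
   /\ gsame_set (gnormal_closure (gsetT T) xr) Gr
   /\ gsame_set (gnormal_closure Gr xr) Gr) /\
  (gnormal Gr (gsetT T)
   /\ quotient_iso (gsetT T) Gr (Zr_group r)
   /\ quotient2_iso (gsetT T) (gderived (gsetT T)) Gr (Zr_group r)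
   /\ quotient_iso (gcenter (gsetT T)) (gcenter Gr) (Zr_group r)) /\
  (forall x : T, exists y, Gr y /\ gcenter (gsetT T) (gmul x (ginv y))).
Proof.
cbv zeta.
split; first exact (Gr_embedding hp hq hpres hr hrp hrq).
split; first split.
- exact (gcenter_Gr hp hq hpres hr hrp hrq).
- exact (gcenter_Gr_sub hpres hr hrp hrq).
split; first exact (gderived_Gr hpres hr hrp hrq).
split; first split.
- exact (Gr_abelianization_cyclic hp hq hpres hr hrp hrq hbez).
- split; [exact (normal_closure_xr hpres hr hrp hrq hbez) |].
  exact (normal_closure_xr_Gr hpres hr hrp hrq hbez).
split.
  split; first exact (Gr_normal hpres hr hrp hrq).
  split; first exact (Gr_quotient_iso hp hq hpres hr hrp hrq).
  split; [exact (Gr_derived_quotient_iso hp hq hpres hr hrp hrq) |].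
  exact (center_quotient_iso hp hq hpres hr hrp hrq).
move=> x; have [y Gry cxy] := torus_mod_center_Gr hpres hr hrp hrq x.
by exists y; split; last exact: central_gcenterT.
Qed.
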